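(* Let $\mathcal{H}$ be a complex Hilbert space, let $T, S\in\mathbb{B}(\mathcal{H})$, and let $N(\cdot)$ be a self-adjoint algebra norm on $\mathbb{B}(\mathcal{H})$. Then, for each choice of sign $\pm$, $$w_{N}(TS) \leq \min\Big\{N(T)w_{N}(S) + \tfrac{1}{2} w_{N}(TS \pm ST^* ),\ N(S)w_{N}(T) + \tfrac{1}{2} w_{N}(TS \pm S^*T)\Big\} \leq 2\min\Big\{N(T)w_{N}(S),\ N(S)w_{N}(T)\Big\} \leq 4w_{N}(T)w_{N}(S).$$
   Context: $\mathbb{B}(\mathcal{H})$ is the algebra of bounded linear operators on $\mathcal{H}$. A norm $N(\cdot)$ on $\mathbb{B}(\mathcal{H})$ is an algebra norm if $N(TS)\le N(T)N(S)$ for all $T,S$, and self-adjoint if $N(T^* )=N(T)$ for all $T$. For $A\in\mathbb{B}(\mathcal{H})$, ${\rm Re}(A)=\frac{A+A^*}{2}$. The generalized numerical radius is $w_N(T)=\sup_{\theta\in\mathbb{R}} N\big({\rm Re}(e^{i\theta}T)\big)$. *)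

From HB Require Import structures.
From mathcomp Require Import all_boot all_order all_algebra.
From mathcomp Require Import classical_sets reals trigo.
From mathcomp Require complex.
Import complex.ComplexField.
From Stdlib Require Import ClassicalEpsilon.
Set Implicit Arguments. Unset Strict Implicit. Unset Printing Implicit Defensive.
Import Order.TTheory GRing.Theory Num.Theory.
Local Open Scope ring_scope.

Notation CC R := (complex.complex R).

Section Hilbert.
Variables (R : realType) (V : lmodType (CC R)) (inner : V -> V -> CC R).

Definition is_inner_product : Prop :=
  [/\ (forall (a : CC R) (x y z : V), inner (a *: x + y) z = a * inner x z + inner y z),
      (forall x y : V, inner y x = complex.conjc (inner x y)),
      (forall x : V, 0 <= inner x x) &
      (forall x : V, inner x x = 0 -> x = 0)].

Definition hnorm (x : V) : R := Num.sqrt (complex.Re (inner x x)).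

Definition hcomplete : Prop :=
  forall u : nat -> V,
    (forall e : R, 0 < e -> exists N : nat, forall m n : nat,
         (N <= m)%N -> (N <= n)%N -> hnorm (u m - u n) < e) ->
    exists l : V, forall e : R, 0 < e -> exists N : nat, forall n : nat,
         (N <= n)%N -> hnorm (u n - l) < e.

Definition is_hilbert : Prop := is_inner_product /\ hcomplete.

Definition bounded_op (A : V -> V) : Prop :=
  (forall (a : CC R) (x y : V), A (a *: x + y) = a *: A x + A y) /\
  exists M : R, forall x : V, hnorm (A x) <= M * hnorm x.

Definition op_add (A B : V -> V) : V -> V := fun x => A x + B x.
Definition op_scale (c : CC R) (A : V -> V) : V -> V := fun x => c *: A x.
Definition op_mul (A B : V -> V) : V -> V := fun x => A (B x).
Definition op_zero : V -> V := fun _ => 0.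

Definition adjoint (A : V -> V) : V -> V :=
  epsilon (inhabits op_zero)
    (fun B : V -> V => forall x y : V, inner (A x) y = inner x (B y)).

Definition ReOp (A : V -> V) : V -> V :=
  op_scale (2%:R)^-1 (op_add A (adjoint A)).

Definition algebra_norm (N : (V -> V) -> R) : Prop :=
  [/\ (forall A, bounded_op A -> 0 <= N A),
      (forall A, bounded_op A -> N A = 0 -> A = op_zero),
      (forall c A, bounded_op A -> N (op_scale c A) = complex.ComplexField.Normc.normc c * N A),
      (forall A B, bounded_op A -> bounded_op B -> N (op_add A B) <= N A + N B) &
      (forall A B, bounded_op A -> bounded_op B -> N (op_mul A B) <= N A * N B)].

Definition selfadjoint_norm (N : (V -> V) -> R) : Prop :=
  forall A, bounded_op A -> N (adjoint A) = N A.

Definition expi (t : R) : CC R := complex.Complex (cos t) (sin t).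

Definition wN (N : (V -> V) -> R) (A : V -> V) : R :=
  sup [set N (ReOp (op_scale (expi t) A)) | t in [set: R]]%classic.
End Hilbert.

(* Since N (Re (e^{it} X)) <= w_N(X) for all t, the identity
   Re (e^{it} TS) = (Re (e^{it} (TS + sW)) + Re (e^{it} (TS - sW))) / 2
   gives w_N(TS) <= (w_N(TS + sW) + w_N(TS - sW)) / 2 for every W.
   For W = S T^* and s = +-1 there is a Leibniz-type identity
   Re (e^{it} (TS + s S T^* )) = T P + s P T^* with P = (e^{it} S + s (e^{it} S)^* ) / 2,
   and P is Re (e^{it} S) for s = 1 and i Re (e^{i(t - pi/2)} S) for s = -1, so
   w_N(TS +- S T^* ) <= 2 N(T) w_N(S); symmetrically for W = S^* T.
   Finally T = Re T + i Im T gives N(T) <= 2 w_N(T).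
   Adjoints of bounded operators exist by the Riesz representation theorem,
   proved by minimizing the norm on the affine hyperplane {f = 1}. *)

From Pilot Require Import Defs.
From mathcomp Require Import all_boot all_order all_algebra.
From mathcomp Require Import boolp classical_sets reals trigo.
From mathcomp Require complex.
From mathcomp Require Import ring lra.
From Stdlib Require Import ClassicalEpsilon.
Import Order.TTheory GRing.Theory Num.Theory.
Import complex complex.ComplexField.Normc.
Set Implicit Arguments. Unset Strict Implicit. Unset Printing Implicit Defensive.
Local Open Scope ring_scope.
Local Open Scope complex_scope.

Section ComplexParts.
Variable R : realType.
Implicit Types z w : R[i].

Lemma complex_ext z w : Re z = Re w -> Im z = Im w -> z = w.
Proof. by case: z => a b; case: w => c d /= -> ->. Qed.

Lemma cReD z w : Re (z + w) = Re z + Re w. Proof. by case: z; case: w. Qed.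
Lemma cImD z w : Im (z + w) = Im z + Im w. Proof. by case: z; case: w. Qed.
Lemma cReN z : Re (- z) = - Re z. Proof. by case: z. Qed.
Lemma cImN z : Im (- z) = - Im z. Proof. by case: z. Qed.
Lemma cReM z w : Re (z * w) = Re z * Re w - Im z * Im w. Proof. by case: z; case: w. Qed.
Lemma cImM z w : Im (z * w) = Re z * Im w + Im z * Re w. Proof. by case: z; case: w. Qed.
Lemma cReJ z : Re (conjc z) = Re z. Proof. by case: z. Qed.
Lemma cImJ z : Im (conjc z) = - Im z. Proof. by case: z. Qed.

Definition cRIE := (cReD, cImD, cReN, cImN, cReM, cImM, cReJ, cImJ).

Lemma normc_ge0 z : 0 <= normc z.
Proof. by case: z => a b; apply: sqrtr_ge0. Qed.

Lemma normc_sqr z : normc z ^+ 2 = Re z ^+ 2 + Im z ^+ 2.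
Proof. by case: z => a b; rewrite /= sqr_sqrtr // addr_ge0 ?sqr_ge0. Qed.

Lemma normc_i : normc 'i = 1 :> R.
Proof. by rewrite /= expr0n add0r expr1n sqrtr1. Qed.

Lemma normc_sign (s : R[i]) : s = 1 \/ s = -1 -> normc s = 1.
Proof. by case=> ->; rewrite ?normcN normc1. Qed.

Lemma normc_half : normc (2%:R^-1 : R[i]) = 2%:R^-1.
Proof. by rewrite normcV normcMn normc1. Qed.

End ComplexParts.

Lemma normc_expi (R : realType) (t : R) : normc (expi t) = 1.
Proof. by rewrite /= cos2Dsin2 sqrtr1. Qed.

Lemma expiBpihalf (R : realType) (t : R) : expi (t - pi / 2%:R) = - 'i * expi t.
Proof.
by apply: complex_ext; rewrite /expi cosBpihalf sinBpihalf !cRIE /=; ring.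
Qed.

Section InnerProduct.
Variables (R : realType) (V : lmodType R[i]) (inner : V -> V -> R[i]).
Hypothesis ip : is_inner_product inner.
Local Notation nrm2 x := (Re (inner x x)).
Local Notation hnorm := (hnorm inner).
Implicit Types (x y z : V) (a : R[i]).

Lemma innerDl x y z : inner (x + y) z = inner x z + inner y z.
Proof. by case: ip => h _ _ _; have := h 1 x y z; rewrite scale1r mul1r. Qed.

Lemma inner0l z : inner 0 z = 0.
Proof. by apply: (addrI (inner 0 z)); rewrite -innerDl !addr0. Qed.

Lemma innerZl a x z : inner (a *: x) z = a * inner x z.
Proof. by case: ip => h _ _ _; have := h a x 0 z; rewrite !addr0 inner0l addr0. Qed.

Lemma innerC x y : inner y x = conjc (inner x y).
Proof. by case: ip. Qed.

Lemma innerDr x y z : inner z (x + y) = inner z x + inner z y.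
Proof. by rewrite innerC innerDl rmorphD /= -!innerC. Qed.

Lemma innerZr a x z : inner z (a *: x) = conjc a * inner z x.
Proof. by rewrite innerC innerZl rmorphM /= -innerC. Qed.

Lemma inner0r z : inner z 0 = 0.
Proof. by rewrite innerC inner0l rmorph0. Qed.

Lemma innerNl x z : inner (- x) z = - inner x z.
Proof. by rewrite -scaleN1r innerZl mulN1r. Qed.

Lemma innerNr x z : inner z (- x) = - inner z x.
Proof. by rewrite -scaleN1r innerZr rmorphN1 mulN1r. Qed.

Lemma innerBl x y z : inner (x - y) z = inner x z - inner y z.
Proof. by rewrite innerDl innerNl. Qed.

Lemma innerBr x y z : inner z (x - y) = inner z x - inner z y.
Proof. by rewrite innerDr innerNr. Qed.

Definition innerE := (innerDl, innerDr, innerZl, innerZr, innerNl, innerNr,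
  inner0l, inner0r).

Lemma inner_self x : inner x x = (nrm2 x)%:C.
Proof.
case: ip => _ _ + _ => /(_ x); rewrite lecE => /andP[/eqP Im0 _].
by apply: complex_ext; rewrite //= Im0.
Qed.

Lemma nrm2_ge0 x : 0 <= nrm2 x.
Proof. by case: ip => _ _ + _ => /(_ x); rewrite lecE => /andP[]. Qed.

Lemma nrm2_eq0 x : nrm2 x = 0 -> x = 0.
Proof. by case: ip => _ _ _ + nx0; apply; rewrite inner_self nx0. Qed.

Lemma nrm2D x y : nrm2 (x + y) = nrm2 x + 2%:R * Re (inner x y) + nrm2 y.
Proof. by rewrite !innerE (innerC x y) !cRIE; ring. Qed.

Lemma nrm2N x : nrm2 (- x) = nrm2 x.
Proof. by rewrite innerNl innerNr opprK. Qed.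

Lemma nrm2Z a x : nrm2 (a *: x) = normc a ^+ 2 * nrm2 x.
Proof. by rewrite innerZl innerZr inner_self normc_sqr !cRIE /=; ring. Qed.

Lemma nrm2_parallelogram x y :
  nrm2 (x - y) + nrm2 (x + y) = 2%:R * nrm2 x + 2%:R * nrm2 y.
Proof. by rewrite !nrm2D nrm2N innerNr cReN; ring. Qed.

Lemma eq_inner_l x y : (forall z, inner x z = inner y z) -> x = y.
Proof.
move=> eq_xy; apply/eqP; rewrite -subr_eq0; apply/eqP/nrm2_eq0.
by rewrite innerBl eq_xy -innerBl subrr inner0l.
Qed.

Lemma eq_inner_r x y : (forall z, inner z x = inner z y) -> x = y.
Proof. by move=> eq_xy; apply: eq_inner_l => z; rewrite innerC eq_xy -innerC. Qed.

(* Expand [0 <= nrm2 (n x - p y)] with [n = nrm2 y] and [p = inner x y]. *)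
Lemma normc_inner_sqr_le x y : normc (inner x y) ^+ 2 <= nrm2 x * nrm2 y.
Proof.
have [y0|ny_neq0] := eqVneq (nrm2 y) 0.
  by rewrite (nrm2_eq0 y0) inner0r normc0 expr0n /= inner0r mulr0.
have ny_gt0 : 0 < nrm2 y by rewrite lt_def ny_neq0 nrm2_ge0.
have := nrm2_ge0 ((nrm2 y)%:C *: x - inner x y *: y).
rewrite !(innerBl, innerBr, innerZl, innerZr) (innerC x y) (inner_self x) (inner_self y).
rewrite normc_sqr; move: (inner x y) (nrm2 x) (nrm2 y) ny_gt0 => [p q] nx ny ny_gt0.
rewrite !cRIE /= => h; nra.
Qed.

Lemma hnorm_ge0 x : 0 <= hnorm x.
Proof. exact: sqrtr_ge0. Qed.

Lemma hnorm_sqr x : hnorm x ^+ 2 = nrm2 x.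
Proof. by rewrite sqr_sqrtr // nrm2_ge0. Qed.

Lemma Re_inner_le x y : Re (inner x y) <= hnorm x * hnorm y.
Proof.
have : normc (inner x y) ^+ 2 <= (hnorm x * hnorm y) ^+ 2.
  by rewrite exprMn !hnorm_sqr normc_inner_sqr_le.
rewrite normc_sqr => h.
have := mulr_ge0 (hnorm_ge0 x) (hnorm_ge0 y); nra.
Qed.

Lemma hnormD_le x y : hnorm (x + y) <= hnorm x + hnorm y.
Proof.
rewrite -ler_sqr ?nnegrE ?addr_ge0 ?hnorm_ge0 // sqrrD !hnorm_sqr nrm2D.
have := Re_inner_le x y; lra.
Qed.

Lemma hnormN x : hnorm (- x) = hnorm x.
Proof. by rewrite /Defs.hnorm nrm2N. Qed.

Lemma hnormZ a x : hnorm (a *: x) = normc a * hnorm x.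
Proof.
rewrite /Defs.hnorm nrm2Z sqrtrM ?exprn_ge0 ?normc_ge0 //.
by rewrite sqrtr_sqr ger0_norm ?normc_ge0.
Qed.

End InnerProduct.

Definition hcauchy (R : realType) (V : lmodType R[i]) (inner : V -> V -> R[i])
    (u : nat -> V) :=
  forall e : R, 0 < e -> exists N : nat, forall m n : nat,
    (N <= m)%N -> (N <= n)%N -> hnorm inner (u m - u n) < e.

Definition hcvg (R : realType) (V : lmodType R[i]) (inner : V -> V -> R[i])
    (u : nat -> V) (l : V) :=
  forall e : R, 0 < e -> exists N : nat, forall n : nat,
    (N <= n)%N -> hnorm inner (u n - l) < e.

Lemma exists_invS_lt (R : realType) (c : R) : 0 < c -> exists k : nat, k.+1%:R^-1 < c.
Proof. by move=> /ltr_add_invr[k]; rewrite add0r; exists k. Qed.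

Lemma lef_invS (R : realType) (k n : nat) : (k <= n)%N -> n.+1%:R^-1 <= k.+1%:R^-1 :> R.
Proof. by move=> kn; rewrite lef_pV2 ?posrE ?ltr0Sn // ler_nat ltnS. Qed.

Section Riesz.
Variables (R : realType) (V : lmodType R[i]) (inner : V -> V -> R[i]).
Hypotheses (ip : is_inner_product inner) (complete : hcomplete inner).
Local Notation nrm2 x := (Re (inner x x)).
Local Notation hnorm := (hnorm inner).
Variables (f : V -> R[i]) (K : R).
Hypothesis f_linear : forall a x y, f (a *: x + y) = a * f x + f y.
Hypothesis f_bounded : forall x, normc (f x) ^+ 2 <= K * nrm2 x.
Implicit Types (x y l m : V) (u : nat -> V).

Let f0 : f 0 = 0.
Proof.
have := f_linear 1 0 0; rewrite scale1r addr0 mul1r => h.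
by apply: (addrI (f 0)); rewrite addr0 -h.
Qed.

Let fZ a x : f (a *: x) = a * f x.
Proof. by have := f_linear a x 0; rewrite !addr0 f0 addr0. Qed.

Let fD x y : f (x + y) = f x + f y.
Proof. by have := f_linear 1 x y; rewrite scale1r mul1r. Qed.

Let fB x y : f (x - y) = f x - f y.
Proof. by rewrite fD -scaleN1r fZ mulN1r. Qed.

Let D := inf [set nrm2 x | x in [set x | f x = 1]]%classic.

Lemma D_le_nrm2 x : f x = 1 -> D <= nrm2 x.
Proof.
by move=> fx1; apply: ge_inf; [exists 0 => _ [y _ <-]; apply: nrm2_ge0 | exists x].
Qed.

Lemma nrm2_add_ge x y : f x = 1 -> f y = 1 -> 4%:R * D <= nrm2 (x + y).
Proof.
move=> fx1 fy1; have f_mid : f (2%:R^-1 *: (x + y)) = 1.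
  by rewrite fZ fD fx1 fy1 mulVf // pnatr_eq0.
have := D_le_nrm2 f_mid; rewrite nrm2Z // normc_half; lra.
Qed.

(* By the parallelogram law, two almost-minimizers are close. *)
Lemma minimizing_cauchy u :
  (forall n, f (u n) = 1 /\ nrm2 (u n) < D + n.+1%:R^-1) -> hcauchy inner u.
Proof.
move=> hu e e_gt0; have [k hk] : exists k : nat, k.+1%:R^-1 < e ^+ 2 / 4%:R.
  by apply: exists_invS_lt; rewrite divr_gt0 ?exprn_gt0.
exists k => m n km kn.
have close : nrm2 (u m - u n) < e ^+ 2.
  have := nrm2_parallelogram ip (u m) (u n).
  have := nrm2_add_ge (hu m).1 (hu n).1.
  have := (hu m).2; have := (hu n).2.
  have := lef_invS R km; have := lef_invS R kn; move: hk.
  set a := m.+1%:R^-1; set b := n.+1%:R^-1; set c := k.+1%:R^-1; lra.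
rewrite -(hnorm_sqr ip) in close; have := hnorm_ge0 inner (u m - u n); nra.
Qed.

Lemma hcvg_nrm2 u l : hcvg inner u l ->
  forall e, 0 < e -> exists N : nat, forall n, (N <= n)%N -> nrm2 (u n - l) < e.
Proof.
move=> ul e e_gt0; have [N hN] : exists N : nat, forall n, (N <= n)%N ->
    hnorm (u n - l) < Num.sqrt e by apply: ul; rewrite sqrtr_gt0.
exists N => n /hN close; rewrite -(hnorm_sqr ip).
have := sqr_sqrtr (ltW e_gt0); have := hnorm_ge0 inner (u n - l); nra.
Qed.

Lemma hcvg_f_const u l c : hcvg inner u l -> (forall n, f (u n) = c) -> f l = c.
Proof.
move=> ul fu; apply/subr0_eq/eq0_normc/eqP.
rewrite -sqrf_eq0 eq_le sqr_ge0 andbT; apply/ler_addgt0Pr => e e_gt0.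
have K1_gt0 : 0 < `|K| + 1 by rewrite ltr_pwDr // normr_ge0.
have [N hN] := hcvg_nrm2 ul (divr_gt0 e_gt0 K1_gt0).
have := hN N (leqnn N); rewrite ltr_pdivlMr // => close.
have := f_bounded (u N - l); rewrite fB fu -opprB normcN.
have := nrm2_ge0 ip (u N - l); have := ler_norm K; have := normr_ge0 K; nra.
Qed.

Lemma hcvg_nrm2_le u l c : hcvg inner u l -> 0 <= c ->
  (forall n, nrm2 (u n) < c + n.+1%:R^-1) -> nrm2 l <= c.
Proof.
move=> ul c_ge0 hu; rewrite -(hnorm_sqr ip) -[c]sqr_sqrtr //.
rewrite ler_sqr ?nnegrE ?hnorm_ge0 ?sqrtr_ge0 //; apply/ler_addgt0Pr => e e_gt0.
have [k hk] : exists k : nat, k.+1%:R^-1 < e ^+ 2 / 4%:R.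
  by apply: exists_invS_lt; rewrite divr_gt0 ?exprn_gt0.
have [N hN] := ul _ (divr_gt0 e_gt0 (ltr0Sn _ 1)).
pose n := maxn k N.
have un_le : hnorm (u n) < Num.sqrt c + e / 2%:R.
  have := hu n; rewrite -(hnorm_sqr ip) => un.
  have := lef_invS R (leq_maxl k N); move: un hk; set a := n.+1%:R^-1.
  have := sqr_sqrtr c_ge0; have := sqrtr_ge0 c; have := hnorm_ge0 inner (u n).
  set b := k.+1%:R^-1; nra.
have := hN n (leq_maxr k N); have := hnormD_le ip (u n) (l - u n).
by rewrite addrC subrK -[l - u n]opprB (hnormN ip); lra.
Qed.

Lemma exists_nrm2_minimizer : (exists x, f x = 1) ->
  exists2 l, f l = 1 & forall y, f y = 1 -> nrm2 l <= nrm2 y.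
Proof.
move=> [x0 fx0]; pose E := [set nrm2 x | x in [set x | f x = 1]]%classic.
have E_inf : has_inf E.
  by split; [exists (nrm2 x0), x0 | exists 0 => _ [y _ <-]; apply: nrm2_ge0].
have D_ge0 : 0 <= D by apply: lb_le_inf E_inf.1 _ => _ [y _ <-]; apply: nrm2_ge0.
have near_inf n : exists x, f x = 1 /\ nrm2 x < D + n.+1%:R^-1.
  have n_gt0 : 0 < n.+1%:R^-1 :> R by rewrite invr_gt0.
  have [_ [x fx1 <-] ?] := inf_adherent n_gt0 E_inf.
  by exists x.
have [u hu] := boolp.choice near_inf.
have [l ul] := complete (minimizing_cauchy hu).
exists l; first exact: hcvg_f_const ul (fun n => (hu n).1).
move=> y fy1; apply: le_trans (D_le_nrm2 fy1).
exact: hcvg_nrm2_le ul D_ge0 (fun n => (hu n).2).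
Qed.

(* First variation of [nrm2] at the minimizer [l] in the direction [m]. *)
Lemma minimizer_orthogonal l m : f l = 1 ->
  (forall y, f y = 1 -> nrm2 l <= nrm2 y) -> f m = 0 -> inner m l = 0.
Proof.
move=> fl1 l_min fm0.
have [r [r_gt0 rm_le1]] : exists r : R, 0 < r /\ r * nrm2 m <= 1.
  have m1_gt0 : 0 < nrm2 m + 1 by rewrite ltr_pwDr // nrm2_ge0.
  exists (nrm2 m + 1)^-1; rewrite invr_gt0 m1_gt0 ler_pdivrMl // mulr1.
  by rewrite lerDl.
have := l_min (l + (- (r%:C * inner l m)) *: m).
rewrite fD fZ fm0 mulr0 addr0 => /(_ fl1).
rewrite (nrm2D ip) (nrm2Z ip) (innerZr ip) => descent.
have : normc (inner l m) ^+ 2 <= 0.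
  have := mulr_ge0 (ltW r_gt0) (exprn_ge0 2 (normc_ge0 (inner l m))).
  move: descent rm_le1 (nrm2_ge0 ip m); rewrite !normc_sqr.
  by move: (inner l m) (nrm2 m) => [a b] M /=; nra.
move=> p_le0; have p0 : inner l m = 0.
  by apply/eq0_normc/eqP; rewrite -sqrf_eq0 eq_le p_le0 sqr_ge0.
by rewrite (innerC ip) p0 rmorph0.
Qed.

Lemma riesz_representation : exists z, forall x, f x = inner x z.
Proof.
have [[x0 fx0_neq0]|f_eq0] := pselect (exists x, f x != 0); last first.
  exists 0 => x; rewrite (inner0r ip); apply/eqP.
  by apply: contra_notT f_eq0 => fx_neq0; exists x.
have [l fl1 l_min] : exists2 l, f l = 1 & forall y, f y = 1 -> nrm2 l <= nrm2 y.
  by apply: exists_nrm2_minimizer; exists ((f x0)^-1 *: x0); rewrite fZ mulVf.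
have nl_neq0 : nrm2 l != 0.
  apply/eqP => /(nrm2_eq0 ip) l0; move: fl1; rewrite l0 f0 => /eqP.
  by rewrite eq_sym oner_eq0.
exists ((nrm2 l)^-1%:C *: l) => x.
have := minimizer_orthogonal fl1 l_min (m := x - f x *: l).
rewrite fB fZ fl1 mulr1 subrr => /(_ erefl).
rewrite (innerBl ip) (innerZl ip) (innerZr ip) (inner_self ip l) => /subr0_eq ->.
move: (f x) (nrm2 l) nl_neq0 => [a b] c c_neq0 /=.
by apply: complex_ext => /=; field.
Qed.

End Riesz.

Section BoundedOperators.
Variables (R : realType) (V : lmodType R[i]) (inner : V -> V -> R[i]).
Hypotheses (ip : is_inner_product inner) (complete : hcomplete inner).
Local Notation nrm2 x := (Re (inner x x)).
Local Notation hnorm := (hnorm inner).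
Local Notation bounded := (bounded_op inner).
Local Notation adj := (adjoint inner).
Implicit Types (A B : V -> V) (x y : V) (c : R[i]).

Lemma bounded_op_linearD A : bounded A -> forall x y, A (x + y) = A x + A y.
Proof. by case=> A_lin _ x y; have := A_lin 1 x y; rewrite !scale1r. Qed.

Lemma bounded_op_linear0 A : bounded A -> A 0 = 0.
Proof.
by move=> hA; apply: (addrI (A 0)); rewrite -(bounded_op_linearD hA) !addr0.
Qed.

Lemma bounded_op_linearZ A : bounded A -> forall c x, A (c *: x) = c *: A x.
Proof.
move=> hA c x; have [A_lin _] := hA.
by have := A_lin c x 0; rewrite !addr0 (bounded_op_linear0 hA) addr0.
Qed.

Lemma bounded_op_bound A : bounded A ->
  exists2 M, 0 <= M & forall x, hnorm (A x) <= M * hnorm x.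
Proof.
case=> _ [M hM]; exists (Num.max M 0); first by rewrite le_max lexx orbT.
move=> x; apply: le_trans (hM x) _.
by rewrite ler_wpM2r ?hnorm_ge0 // le_max lexx.
Qed.

Lemma op_ext A B : (forall v x, inner (A v) x = inner (B v) x) -> A = B.
Proof. by move=> AB; apply: funext => v; apply: (eq_inner_l ip). Qed.

Lemma adjoint_exists A : bounded A ->
  exists B, forall x y, inner (A x) y = inner x (B y).
Proof.
move=> hA; have [M M_ge0 hM] := bounded_op_bound hA.
have repr y : exists z, forall x, inner (A x) y = inner x z.
  apply: (riesz_representation ip complete (K := M ^+ 2 * nrm2 y)).
    move=> a x x'.
    by rewrite (bounded_op_linearD hA) (bounded_op_linearZ hA) innerDl // innerZl.
  move=> x; apply: le_trans (normc_inner_sqr_le ip _ _) _.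
  rewrite mulrAC ler_wpM2r ?nrm2_ge0 // -!(hnorm_sqr ip) -exprMn.
  by rewrite ler_sqr ?nnegrE ?mulr_ge0 ?hnorm_ge0.
have [B hB] := boolp.choice repr; exists B => x y; exact: hB.
Qed.

Lemma adjointP A : bounded A -> forall x y, inner (A x) y = inner x (adj A y).
Proof. by move=> /adjoint_exists hA; exact: (epsilon_spec _ _ hA). Qed.

Lemma adjoint_unique A B : bounded A ->
  (forall x y, inner (A x) y = inner x (B y)) -> adj A = B.
Proof.
move=> hA hB; apply: funext => y; apply: (eq_inner_r ip) => x.
by rewrite -adjointP.
Qed.

Lemma bounded_op_adjoint A : bounded A -> bounded (adj A).
Proof.
move=> hA; split=> [a x y|].
  apply: (eq_inner_r ip) => z.
  by rewrite innerDr // innerZr // -!adjointP // innerDr // innerZr.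
have [M M_ge0 hM] := bounded_op_bound hA; exists M => y.
have sq : hnorm (adj A y) ^+ 2 <= M * hnorm (adj A y) * hnorm y.
  rewrite (hnorm_sqr ip) -adjointP //; apply: le_trans (Re_inner_le ip _ _) _.
  by rewrite ler_wpM2r ?hnorm_ge0.
have := mulr_ge0 M_ge0 (hnorm_ge0 inner y); have := hnorm_ge0 inner (adj A y).
nra.
Qed.

Lemma bounded_op_add A B : bounded A -> bounded B -> bounded (op_add A B).
Proof.
move=> hA hB; split=> [a x y|].
  rewrite /op_add (bounded_op_linearD hA) (bounded_op_linearD hB).
  by rewrite (bounded_op_linearZ hA) (bounded_op_linearZ hB) scalerDr addrACA.
have [M M_ge0 hM] := bounded_op_bound hA; have [M' M'_ge0 hM'] := bounded_op_bound hB.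
exists (M + M') => x; apply: le_trans (hnormD_le ip _ _) _.
by rewrite mulrDl lerD.
Qed.

Lemma bounded_op_mul A B : bounded A -> bounded B -> bounded (op_mul A B).
Proof.
move=> hA hB; split=> [a x y|].
  by rewrite /op_mul (bounded_op_linearD hB) (bounded_op_linearZ hB)
    (bounded_op_linearD hA) (bounded_op_linearZ hA).
have [M M_ge0 hM] := bounded_op_bound hA; have [M' M'_ge0 hM'] := bounded_op_bound hB.
exists (M * M') => x; apply: le_trans (hM _) _.
by rewrite -mulrA ler_wpM2l.
Qed.

Lemma bounded_op_scale c A : bounded A -> bounded (op_scale c A).
Proof.
move=> hA; split=> [a x y|].
  rewrite /op_scale (bounded_op_linearD hA) (bounded_op_linearZ hA).
  by rewrite scalerDr !scalerA mulrC.
have [M M_ge0 hM] := bounded_op_bound hA; exists (normc c * M) => x.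
by rewrite /op_scale (hnormZ ip) -mulrA ler_wpM2l ?normc_ge0.
Qed.

Lemma bounded_op_ReOp A : bounded A -> bounded (ReOp inner A).
Proof.
by move=> hA; apply/bounded_op_scale/bounded_op_add/bounded_op_adjoint.
Qed.

Lemma adjoint_add A B : bounded A -> bounded B ->
  adj (op_add A B) = op_add (adj A) (adj B).
Proof.
move=> hA hB; apply: adjoint_unique; first exact: bounded_op_add.
by move=> x y; rewrite /op_add innerDl // innerDr // !adjointP.
Qed.

Lemma adjoint_mul A B : bounded A -> bounded B ->
  adj (op_mul A B) = op_mul (adj B) (adj A).
Proof.
move=> hA hB; apply: adjoint_unique; first exact: bounded_op_mul.
by move=> x y; rewrite /op_mul !adjointP.
Qed.

Lemma adjoint_scale c A : bounded A -> adj (op_scale c A) = op_scale (conjc c) (adj A).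
Proof.
move=> hA; apply: adjoint_unique; first exact: bounded_op_scale.
by move=> x y; rewrite /op_scale innerZl // innerZr // conjcK adjointP.
Qed.

Lemma adjointK A : bounded A -> adj (adj A) = A.
Proof.
move=> hA; apply: adjoint_unique; first exact: bounded_op_adjoint.
by move=> x y; rewrite (innerC ip) -adjointP // -(innerC ip).
Qed.

End BoundedOperators.

Ltac bounded_tac := repeat match goal with
  | |- bounded_op _ (op_add _ _) => apply: bounded_op_add
  | |- bounded_op _ (op_mul _ _) => apply: bounded_op_mul
  | |- bounded_op _ (op_scale _ _) => apply: bounded_op_scale
  | |- bounded_op _ (Defs.ReOp _ _) => apply: bounded_op_ReOp
  | |- bounded_op _ (adjoint _ _) => apply: bounded_op_adjoint
  | |- _ => assumption
  end.

Section OperatorIdentities.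
Variables (R : realType) (V : lmodType R[i]) (inner : V -> V -> R[i]).
Hypotheses (ip : is_inner_product inner) (complete : hcomplete inner).
Local Notation bounded := (bounded_op inner).
Local Notation adj := (adjoint inner).
Local Notation ReOp := (ReOp inner).
Implicit Types (A X W : V -> V) (e s : R[i]).

(* [adj_part 1 A] is [Re A] and [adj_part (-1) A] is [i Im A]. *)
Definition adj_part s A : V -> V := op_scale 2%:R^-1 (op_add A (op_scale s (adj A))).

Ltac adjoint_simpl := repeat match goal with
  | |- context [adjoint _ (adjoint _ ?A)] =>
      rewrite (@adjointK _ _ _ ip complete A); [|bounded_tac]
  | |- context [adjoint _ (op_scale ?c ?A)] =>
      rewrite (@adjoint_scale _ _ _ ip complete c A); [|bounded_tac]
  | |- context [adjoint _ (op_add ?A ?B)] =>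
      rewrite (@adjoint_add _ _ _ ip complete A B); [|bounded_tac|bounded_tac]
  | |- context [adjoint _ (op_mul ?A ?B)] =>
      rewrite (@adjoint_mul _ _ _ ip complete A B); [|bounded_tac|bounded_tac]
  end.

Ltac push_linear := repeat match goal with
  | h : bounded_op _ ?A |- context [?A (_ + _)] => rewrite (bounded_op_linearD h)
  | h : bounded_op _ ?A |- context [?A (_ *: _)] => rewrite (bounded_op_linearZ h)
  | h : bounded_op _ ?A |- context [adjoint _ ?A (_ + _)] =>
      rewrite (bounded_op_linearD (bounded_op_adjoint ip complete h))
  | h : bounded_op _ ?A |- context [adjoint _ ?A (_ *: _)] =>
      rewrite (bounded_op_linearZ (bounded_op_adjoint ip complete h))
  end.

Ltac op_ext_tac := rewrite /Defs.ReOp /adj_part; adjoint_simpl;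
  apply: (op_ext ip) => v x; rewrite /op_add /op_scale /op_mul; push_linear;
  rewrite ?(innerDl ip, innerZl ip).

Lemma bounded_op_adj_part s A : bounded A -> bounded (adj_part s A).
Proof. by move=> hA; rewrite /adj_part; bounded_tac. Qed.

Lemma adj_part1 A : adj_part 1 A = ReOp A.
Proof. by apply: funext => v; rewrite /adj_part /op_scale /op_add scale1r. Qed.

Lemma adj_partN1 A : bounded A -> adj_part (-1) A = op_scale 'i (ReOp (op_scale (- 'i) A)).
Proof.
move=> hA; op_ext_tac.
by apply: complex_ext; rewrite !cRIE /=; field.
Qed.

Lemma adj_part_sum A : A = op_add (adj_part 1 A) (adj_part (-1) A).
Proof. by op_ext_tac; field. Qed.

Lemma ReOp_scale_halves e s X W : bounded X -> bounded W ->
  ReOp (op_scale e X) =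
  op_add (op_scale 2%:R^-1 (ReOp (op_scale e (op_add X (op_scale s W)))))
         (op_scale 2%:R^-1 (ReOp (op_scale e (op_add X (op_scale (- s) W))))).
Proof. by move=> hX hW; op_ext_tac; rewrite rmorphN; field. Qed.

Section Products.
Variables (T S : V -> V) (e s : R[i]).
Hypotheses (hT : bounded T) (hS : bounded S) (hs : s = 1 \/ s = -1).

Lemma ReOp_mul_add_mul_adj :
  ReOp (op_scale e (op_add (op_mul T S) (op_scale s (op_mul S (adj T))))) =
  op_add (op_mul T (adj_part s (op_scale e S)))
         (op_scale s (op_mul (adj_part s (op_scale e S)) (adj T))).
Proof. by case: hs => ->; op_ext_tac; rewrite ?rmorph1 ?rmorphN1; field. Qed.

Lemma ReOp_mul_add_adj_mul :
  ReOp (op_scale e (op_add (op_mul T S) (op_scale s (op_mul (adj S) T)))) =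
  op_add (op_mul (adj_part s (op_scale e T)) S)
         (op_scale s (op_mul (adj S) (adj_part s (op_scale e T)))).
Proof. by case: hs => ->; op_ext_tac; rewrite ?rmorph1 ?rmorphN1; field. Qed.

End Products.

End OperatorIdentities.

Section NumericalRadius.
Variables (R : realType) (V : lmodType R[i]) (inner : V -> V -> R[i]).
Hypotheses (ip : is_inner_product inner) (complete : hcomplete inner).
Variable N : (V -> V) -> R.
Hypotheses (hN : algebra_norm inner N) (hNsa : selfadjoint_norm inner N).
Local Notation bounded := (bounded_op inner).
Local Notation adj := (adjoint inner).
Local Notation ReOp := (ReOp inner).
Local Notation adj_part := (adj_part inner).
Local Notation w := (wN inner N).
Implicit Types (A B X W : V -> V) (s : R[i]).

Lemma anorm_ge0 A : bounded A -> 0 <= N A.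
Proof. by case: hN => h _ _ _ _; apply: h. Qed.

Lemma anormZ c A : bounded A -> N (op_scale c A) = normc c * N A.
Proof. by case: hN => _ _ h _ _; apply: h. Qed.

Lemma anormD_le A B : bounded A -> bounded B -> N (op_add A B) <= N A + N B.
Proof. by case: hN => _ _ _ h _; apply: h. Qed.

Lemma anormM_le A B : bounded A -> bounded B -> N (op_mul A B) <= N A * N B.
Proof. by case: hN => _ _ _ _ h; apply: h. Qed.

Lemma anorm_halves_le A B : bounded A -> bounded B ->
  N (op_add (op_scale 2%:R^-1 A) (op_scale 2%:R^-1 B)) <= 2%:R^-1 * N A + 2%:R^-1 * N B.
Proof.
move=> hA hB; apply: le_trans (anormD_le _ _) _; try exact: bounded_op_scale.
by rewrite !anormZ // normc_half.
Qed.

Lemma anorm_ReOp_le A : bounded A -> N (ReOp A) <= N A.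
Proof.
move=> hA; have hAs := bounded_op_adjoint ip complete hA.
rewrite /Defs.ReOp anormZ ?normc_half; last exact: bounded_op_add.
have := anormD_le hA hAs; rewrite hNsa //; lra.
Qed.

Lemma ReOp_le_wN A t : bounded A -> N (ReOp (op_scale (expi t) A)) <= w A.
Proof.
move=> hA; apply: ub_le_sup; last by exists t.
exists (N A) => _ [u _ <-]; apply: le_trans (anorm_ReOp_le _) _.
  exact: bounded_op_scale.
by rewrite anormZ // normc_expi mul1r.
Qed.

Lemma wN_le A c : (forall t, N (ReOp (op_scale (expi t) A)) <= c) -> w A <= c.
Proof.
move=> hc; apply: ge_sup => [|_ [t _ <-] //].
by exists (N (ReOp (op_scale (expi 0) A))), 0.
Qed.

Lemma anorm_adj_part_le A s t : bounded A -> s = 1 \/ s = -1 ->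
  N (adj_part s (op_scale (expi t) A)) <= w A.
Proof.
move=> hA [->|->]; first by rewrite adj_part1; apply: ReOp_le_wN.
have heA : bounded (op_scale (expi t) A) by apply: bounded_op_scale.
rewrite (adj_partN1 ip complete heA) anormZ; last exact/bounded_op_ReOp/bounded_op_scale.
have -> : op_scale (- 'i) (op_scale (expi t) A) = op_scale (expi (t - pi / 2%:R)) A.
  by apply: funext => v; rewrite /op_scale scalerA expiBpihalf.
by rewrite normc_i mul1r ReOp_le_wN.
Qed.

Lemma anorm_le_2wN A : bounded A -> N A <= 2%:R * w A.
Proof.
move=> hA; have heA : bounded (op_scale (expi 0) A) by apply: bounded_op_scale.
have -> : N A = N (op_scale (expi 0) A) by rewrite anormZ // normc_expi mul1r.
rewrite {1}(adj_part_sum ip (op_scale (expi 0) A)).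
apply: le_trans (anormD_le _ _) _; try exact: bounded_op_adj_part.
have := anorm_adj_part_le (s := 1) 0 hA (or_introl erefl).
have := anorm_adj_part_le (s := -1) 0 hA (or_intror erefl); lra.
Qed.

Lemma wN_ge0 A : bounded A -> 0 <= w A.
Proof. by move=> hA; have := anorm_le_2wN hA; have := anorm_ge0 hA; lra. Qed.

Section Products.
Variables (T S : V -> V) (s : R[i]).
Hypotheses (hT : bounded T) (hS : bounded S) (hs : s = 1 \/ s = -1).

Lemma wN_mul_add_mul_adj_le :
  w (op_add (op_mul T S) (op_scale s (op_mul S (adj T)))) <= 2%:R * (N T * w S).
Proof.
apply: wN_le => t; rewrite (ReOp_mul_add_mul_adj ip complete _ hT hS hs).
set P := adj_part s _; have hP : bounded P by apply/bounded_op_adj_part; bounded_tac.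
apply: le_trans (anormD_le _ _) _; try bounded_tac.
rewrite anormZ ?normc_sign ?mul1r //; try bounded_tac.
have := anormM_le hT hP; have := anormM_le hP (bounded_op_adjoint ip complete hT).
rewrite hNsa //; have := anorm_adj_part_le t hS hs; rewrite -/P.
have := anorm_ge0 hT; nra.
Qed.

Lemma wN_mul_add_adj_mul_le :
  w (op_add (op_mul T S) (op_scale s (op_mul (adj S) T))) <= 2%:R * (N S * w T).
Proof.
apply: wN_le => t; rewrite (ReOp_mul_add_adj_mul ip complete _ hT hS hs).
set P := adj_part s _; have hP : bounded P by apply/bounded_op_adj_part; bounded_tac.
apply: le_trans (anormD_le _ _) _; try bounded_tac.
rewrite anormZ ?normc_sign ?mul1r //; try bounded_tac.
have := anormM_le hP hS; have := anormM_le (bounded_op_adjoint ip complete hS) hP.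
rewrite hNsa //; have := anorm_adj_part_le t hT hs; rewrite -/P.
have := anorm_ge0 hS; nra.
Qed.

End Products.

Lemma wN_le_halves s X W : bounded X -> bounded W ->
  w X <= 2%:R^-1 * w (op_add X (op_scale s W)) + 2%:R^-1 * w (op_add X (op_scale (- s) W)).
Proof.
move=> hX hW; apply: wN_le => t; rewrite (ReOp_scale_halves ip complete _ s hX hW).
apply: le_trans (anorm_halves_le _ _) _; try bounded_tac.
have hXp : bounded (op_add X (op_scale s W)) by bounded_tac.
have hXm : bounded (op_add X (op_scale (- s) W)) by bounded_tac.
have := ReOp_le_wN t hXp; have := ReOp_le_wN t hXm; lra.
Qed.

Lemma sign_opp s : s = 1 \/ s = -1 -> - s = 1 \/ - s = -1.
Proof. by case=> ->; [right | left; rewrite opprK]. Qed.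

Lemma wN_mul_le_mul_adj T S s : bounded T -> bounded S -> s = 1 \/ s = -1 ->
  w (op_mul T S) <=
  N T * w S + 2%:R^-1 * w (op_add (op_mul T S) (op_scale s (op_mul S (adj T)))).
Proof.
move=> hT hS hs; have hTS : bounded (op_mul T S) by bounded_tac.
have hST : bounded (op_mul S (adj T)) by bounded_tac.
have := wN_le_halves s hTS hST; have := wN_mul_add_mul_adj_le hT hS (sign_opp hs); lra.
Qed.

Lemma wN_mul_le_adj_mul T S s : bounded T -> bounded S -> s = 1 \/ s = -1 ->
  w (op_mul T S) <=
  N S * w T + 2%:R^-1 * w (op_add (op_mul T S) (op_scale s (op_mul (adj S) T))).
Proof.
move=> hT hS hs; have hTS : bounded (op_mul T S) by bounded_tac.
have hST : bounded (op_mul (adj S) T) by bounded_tac.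
have := wN_le_halves s hTS hST; have := wN_mul_add_adj_mul_le hT hS (sign_opp hs); lra.
Qed.

End NumericalRadius.

Theorem theorem2p8 (R : realType) (V : lmodType (CC R)) (inner : V -> V -> CC R)
  (hH : is_hilbert inner) (N : (V -> V) -> R)
  (hN : algebra_norm inner N) (hNsa : selfadjoint_norm inner N)
  (T S : V -> V) (hT : bounded_op inner T) (hS : bounded_op inner S)
  (s : CC R) (hs : s = 1 \/ s = -1) :
  let w := wN inner N in
  let TS := op_mul T S in
  w TS <= Num.min (N T * w S + 2%:R^-1 * w (op_add TS (op_scale s (op_mul S (adjoint inner T)))))
                  (N S * w T + 2%:R^-1 * w (op_add TS (op_scale s (op_mul (adjoint inner S) T))))
  /\ Num.min (N T * w S + 2%:R^-1 * w (op_add TS (op_scale s (op_mul S (adjoint inner T)))))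
             (N S * w T + 2%:R^-1 * w (op_add TS (op_scale s (op_mul (adjoint inner S) T))))
     <= 2%:R * Num.min (N T * w S) (N S * w T)
  /\ 2%:R * Num.min (N T * w S) (N S * w T) <= 4%:R * w T * w S.
Proof.
move=> w TS; rewrite {}/w {}/TS; have [ip complete] := hH.
have boundA := wN_mul_add_mul_adj_le ip complete hN hNsa hT hS hs.
have boundB := wN_mul_add_adj_mul_le ip complete hN hNsa hT hS hs.
have wS_ge0 := wN_ge0 ip complete hN hNsa hS.
have NT_le := anorm_le_2wN ip complete hN hNsa hT.
split; first by rewrite le_min !(wN_mul_le_mul_adj, wN_mul_le_adj_mul).
split.
  rewrite minr_pMr ?ler0n // le_min !ge_min.
  by apply/andP; split; apply/orP; [left | right]; lra.
have : Num.min (N T * wN inner N S) (N S * wN inner N T) <= N T * wN inner N S.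
  by rewrite ge_min lexx.
nra.
Qed.
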